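(* Let $m>n$ be positive integers and let $\sigma$ be a shuffle whose last entry is $\sigma(m')=n$, and $\lambda=\zeta(\sigma)$ (so $\lambda_1=m$). Then: (a) $\zeta(\overline\sigma)=\overline\lambda$. (b) Let $\alpha=\epsilon_i-\delta_j$ and suppose $i$ immediately precedes $j'$ in the one-line notation of $\sigma$. Let $r_\alpha(\sigma)=(i,j')\sigma$ be the shuffle obtained by interchanging $i$ and $j'$ in the one-line notation. Then $\overline{r_\alpha(\sigma)}=r_{\nu\alpha}(\overline\sigma)$, where $r_{\nu\alpha}(\overline\sigma)=(i+1,j')\overline\sigma$ (with $i+1$ read as $1$ if $i=n$).
   Context: Let $I=\{1,\dots,n\}\cup\{1',\dots,m'\}$ and for a permutation $w$ of $I$ its one-line notation is $(w(1),\dots,w(n),w(1'),\dots,w(m'))$ (positions ordered $1<\dots<n<1'<\dots<m'$). A shuffle is a permutation $\sigma$ of $I$ whose one-line notation contains $1,\dots,n$ and $1',\dots,m'$ each as subsequences in increasing order. $\zeta(\sigma)$ is the partition obtained as follows: draw a lattice path in an $n\times m$ rectangle from the top-left to the bottom-right corner whose $k$-th unit step is down if the $k$-th entry of the one-line notation is unprimed and right otherwise; $\zeta(\sigma)$ is the Young diagram of boxes below the path (row $\epsilon_i$, counted from the top, has $\lambda_{n+1-i}$ boxes). For $\lambda_1=m$, $\overline\lambda=(\lambda_2,\dots,\lambda_n,0)$. Let $\nu^{-1}$ be the permutation of $I$ with $\nu^{-1}(k)=k+1$ for $k\in[n-1]$, $\nu^{-1}(n)=1$, fixing primed elements; for $\sigma$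 with last entry $n$, $\overline\sigma$ is the shuffle with one-line notation $(1,\nu^{-1}\sigma(1),\dots,\nu^{-1}\sigma(n),\nu^{-1}\sigma(1'),\dots,\nu^{-1}\sigma((m-1)'))$, i.e. $1$ followed by $\nu^{-1}$ applied to the first $m+n-1$ entries of $\sigma$. $\nu(\epsilon_i-\delta_j)=\epsilon_{i+1}-\delta_j$ (indices of $\epsilon$ mod $n$ in $\{1,\dots,n\}$). *)

From mathcomp Require Import all_boot.
Set Implicit Arguments. Unset Strict Implicit. Unset Printing Implicit Defensive.

(* Elements of I = {1..n} u {1'..m'}: unprimed k is [inl k], primed j' is
   [inr j] (1-indexed, as in the paper). *)
Definition elt := (nat + nat)%type.

Definition is_unprimed (x : elt) : bool := if x is inl _ then true else false.
Definition is_primed (x : elt) : bool := ~~ is_unprimed x.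

(* A shuffle is represented by its one-line notation
   (w(1),...,w(n),w(1'),...,w(m')), which determines the permutation. *)
Definition is_shuffle (n m : nat) (s : seq elt) : bool :=
  [&& perm_eq s (map inl (iota 1 n) ++ map inr (iota 1 m)),
      subseq (map inl (iota 1 n)) s & subseq (map inr (iota 1 m)) s].

(* Lattice path: k-th step is down (true) iff k-th entry is unprimed. *)
Definition lpath (s : seq elt) : seq bool := map is_unprimed s.

Definition downs_before (p : seq bool) (k : nat) : nat := count id (take k p).

(* Number of boxes below the path in row r (0-indexed from the top) of the
   rectangle: the box in row r, column c lies below the path iff the
   (c+1)-th right step is taken at height (number of previous down steps) <= r. *)
Definition row_len (p : seq bool) (r : nat) : nat :=
  count (fun k => ~~ nth true p k && (downs_before p k <= r)) (iota 0 (size p)).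

(* zeta(sigma) = (lambda_1, ..., lambda_n), where row eps_i (1-indexed from
   the top) has lambda_(n+1-i) boxes, i.e. lambda_k is row n-k (0-indexed). *)
Definition zeta (n : nat) (s : seq elt) : seq nat :=
  [seq row_len (lpath s) (n - k) | k <- iota 1 n].

Definition lbar (l : seq nat) : seq nat := behead l ++ [:: 0].

Definition nuinv (n : nat) (x : elt) : elt :=
  match x with
  | inl k => inl (if k == n then 1 else k.+1)
  | inr j => inr j
  end.

Definition sbar (n m : nat) (s : seq elt) : seq elt :=
  inl 1 :: map (nuinv n) (take (m + n - 1) s).

(* A root eps_i - delta_j is represented by the pair (i, j). *)
Definition nu_root (n : nat) (a : nat * nat) : nat * nat :=
  ((if a.1 == n then 1 else a.1.+1), a.2).

Definition transp (x y z : elt) : elt :=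
  if z == x then y else if z == y then x else z.

(* r_alpha(sigma) = (i, j') sigma : one-line notation of the composite, i.e.
   the transposition applied to every entry of the one-line notation. *)
Definition r_root (a : nat * nat) (s : seq elt) : seq elt :=
  map (transp (inl a.1) (inr a.2)) s.

From mathcomp Require Import all_boot.
Set Implicit Arguments. Unset Strict Implicit. Unset Printing Implicit Defensive.

(* Since sigma ends with n, its lattice path ends with a down step, while
   sigma-bar starts with the down step 1 followed by the first m+n-1 entries
   of sigma relabelled by nu^-1, which preserves the primed/unprimed pattern.
   So the path of sigma-bar is that of sigma moved one row down: the top row
   becomes empty and row r+1 of the new diagram is row r of the old one,
   which gives lambda-bar.  For (b), i is followed by j' while n is the last
   entry, so i <> n; then nu^-1 conjugates the transposition (i, j') into
   (i+1, j'), which fixes the new first entry 1. *)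

Lemma row_len_rcons_down p r : row_len (rcons p true) r = row_len p r.
Proof.
rewrite /row_len size_rcons -addn1 iotaD count_cat /= nth_rcons ltnn if_same /= [LHS]addn0.
apply: eq_in_count => k; rewrite mem_iota add0n => /andP[_ ltkp].
by rewrite nth_rcons ltkp /downs_before -cats1 takel_cat // ltnW.
Qed.

Lemma row_len_cons_down p r :
  row_len (true :: p) r =
  count (fun k => ~~ nth true p k && (downs_before p k < r)) (iota 0 (size p)).
Proof. by rewrite /row_len /= -[1]addn0 iotaDl count_map. Qed.

Lemma row_len_cons_down0 p : row_len (true :: p) 0 = 0.
Proof.
by rewrite row_len_cons_down (@eq_count _ _ pred0) ?count_pred0 // => k /=; rewrite andbF.
Qed.

Lemma row_len_cons_downS p r : row_len (true :: p) r.+1 = row_len p r.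
Proof. by rewrite row_len_cons_down. Qed.

Lemma lpath_nuinv n s : lpath (map (nuinv n) s) = lpath s.
Proof. by rewrite /lpath -map_comp; apply: eq_map => -[]. Qed.

Lemma zeta_cons1_nuinv n s : 0 < n ->
  zeta n (inl 1 :: map (nuinv n) s) = lbar (zeta n (rcons s (inl n))).
Proof.
case: n => // n _.
have lpath_cons1 : lpath (inl 1 :: map (nuinv n.+1) s) = true :: lpath s.
  by rewrite /= lpath_nuinv.
have lpath_rcons : lpath (rcons s (inl n.+1)) = rcons (lpath s) true.
  by rewrite /lpath map_rcons.
have iota_last : iota 1 n.+1 = iota 1 n ++ [:: n.+1].
  by rewrite -[in LHS](addn1 n) iotaD.
rewrite /zeta /lbar lpath_cons1 lpath_rcons [in LHS]iota_last map_cat /=.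
rewrite subnn row_len_cons_down0 -[2]/(1 + 1) iotaDl -map_comp; congr (_ ++ _).
apply/eq_in_map => k; rewrite mem_iota add1n ltnS => /andP[_ kn] /=.
by rewrite row_len_rcons_down add1n subSS subSn // row_len_cons_downS.
Qed.

Lemma shuffle_size n m s : is_shuffle n m s -> size s = n + m.
Proof. by case/and3P => /perm_size-> _ _; rewrite size_cat !size_map !size_iota. Qed.

Lemma shuffle_uniq n m s : is_shuffle n m s -> uniq s.
Proof.
case/and3P => /perm_uniq-> _ _.
rewrite cat_uniq !map_inj_uniq ?iota_uniq /= ?andbT; try by move=> ? ? [].
by apply/hasPn => _ /mapP[k _ ->]; apply/mapP => -[].
Qed.

Lemma sbar_rcons n m s x : size s = m + n - 1 ->
  sbar n m (rcons s x) = inl 1 :: map (nuinv n) s.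
Proof. by move=> size_s; rewrite /sbar -size_s -cats1 takel_cat // take_size. Qed.

Lemma infix_pair_neq_last (T : eqType) (s : seq T) (x y z : T) :
  uniq (rcons s x) -> infix [:: y; z] (rcons s x) -> y != x.
Proof.
move=> + /infixP[a [b def_s]]; rewrite def_s cat_uniq => /and3P[_ _ /andP[yNzb _]].
have -> : x = last z b by have := congr1 (last x) def_s; rewrite last_rcons last_cat.
by apply: contraNneq yNzb => ->; apply: mem_last.
Qed.

Lemma nuinv_transp n i j x : 0 < i -> i != n ->
  nuinv n (transp (inl i) (inr j) x) = transp (inl i.+1) (inr j) (nuinv n x).
Proof.
(* [0 < i] rules out [i.+1 = 1 = nuinv n n]. *)
move=> i_gt0 /negbTE inNn; rewrite /transp.
case: x => [k|k] /=; last by case: eqP => //=; rewrite inNn.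
rewrite !(inj_eq inl_inj); case: (eqVneq k i) => [->|kNi]; first by rewrite inNn !eqxx.
case: (eqVneq k n) => [->|kNn] /=; last by rewrite (negbTE kNn) eqSS (negbTE kNi).
by rewrite eqxx eqSS eq_sym (gtn_eqF i_gt0).
Qed.

Lemma transp_id (x y z : elt) : z != x -> z != y -> transp x y z = z.
Proof. by rewrite /transp => /negbTE-> /negbTE->. Qed.

Lemma map_nuinv_r_root n i j s : 0 < i -> i != n ->
  map (nuinv n) (r_root (i, j) s) = r_root (nu_root n (i, j)) (map (nuinv n) s).
Proof.
move=> i_gt0 iNn; rewrite /r_root /nu_root /= (negbTE iNn) -!map_comp.
by apply: eq_map => x /=; apply: nuinv_transp.
Qed.

Theorem lemma3p5 (n m : nat) (s : seq elt) :
  0 < n -> n < m ->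
  is_shuffle n m s ->
  last (inr 0) s = inl n ->
  (* (a) *)
  zeta n (sbar n m s) = lbar (zeta n s) /\
  (* (b) *)
  (forall i j : nat, 1 <= i <= n -> 1 <= j <= m ->
     infix [:: inl i; inr j] s ->
     sbar n m (r_root (i, j) s) = r_root (nu_root n (i, j)) (sbar n m s)).
Proof.
move=> n_gt0 _ shuffle_s.
have uniq_s := shuffle_uniq shuffle_s; have size_s := shuffle_size shuffle_s.
case/lastP: s shuffle_s uniq_s size_s => [//|s x] _.
rewrite last_rcons size_rcons => uniq_s size_s x_n; subst x.
have size_s' : size s = m + n - 1 by rewrite addnC -size_s subn1.
rewrite sbar_rcons //; split; first exact: zeta_cons1_nuinv.
move=> i j /andP[i_gt0 _] _ ij_infix.
have := infix_pair_neq_last uniq_s ij_infix; rewrite (inj_eq inl_inj) => iNn.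
have r_root_rcons : r_root (i, j) (rcons s (inl n)) = rcons (r_root (i, j) s) (inl n).
  by rewrite /r_root map_rcons transp_id // (inj_eq inl_inj) eq_sym.
rewrite r_root_rcons sbar_rcons ?size_map // map_nuinv_r_root //.
by rewrite /r_root /nu_root /= (negbTE iNn) transp_id // (inj_eq inl_inj) eqSS eq_sym gtn_eqF.
Qed.
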